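(* Let $\theta$ be a random variable with a continuous distribution, let $u(q,\theta)$ be a utility function, monotone increasing in $q$, with $\partial^2u(q,\theta)/\partial q^2=-1/d$ for all $(q,\theta)$, where $d>0$. Let $\lambda>0$, $\epsilon>0$ and let the penalty with deadband be $$\phi(x)=\begin{cases}\dfrac{(|x|-\epsilon)^2}{2\lambda}, & |x|\ge\epsilon,\\ 0, & \text{otherwise.}\end{cases}$$ Let $\pi_0>0$, $\pi_2>0$, $p\in(0,1)$. Define $q^a(\theta)=\arg\min_q\{\pi_0 q-u(q,\theta)\}$, $q^b(f,\theta)=\arg\min_q\{\pi_0 q-u(q,\theta)+\phi(f-q)\}$, $q^c(\theta)=\arg\min_q\{\pi_0 q-u(q,\theta)-\pi_2(f-q)\}$, $$H(f)=p\,\mathbb{E}_\theta[\pi_0 q^c-u(q^c,\theta)-\pi_2(f-q^c)]+(1-p)\,\mathbb{E}_\theta[\pi_0 q^b-u(q^b,\theta)+\phi(f-q^b)],$$ and let $f^*$ be the optimal baseline report (minimizer of $H$). Suppose $q^a(\theta)\in[q_{\min},q_{\max}]$ for all $\theta$ and $\max\{q_{\max}-\mathbb{E}_\theta q^a(\theta),\ \mathbb{E}_\theta q^a(\theta)-q_{\min}\}\le\epsilon$. Then the expected inflation of the baseline report satisfies $$\mathbb{E}_\theta\,\delta f^*(p)=f^*-\mathbb{E}_\theta q^a(\theta)\le(d+\lambda)\frac{p\,\pi_2}{1-p}+\epsilon,$$ and the mechanism is individually rational.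
   Context: A consumer in a demand response program self-reports baseline $f$; with probability $p$ it is called and paid $\pi_2$ per unit of reduction $f-q$, otherwise it pays the penalty $\phi(f-q)$. $\pi_0$ is the retail price and $q^a(\theta)$ is the consumption when not participating (true baseline). Individual rationality means that the consumer's minimal expected cost when participating with its optimal report, $H(f^* )$, is no larger than its expected cost when not participating, $\mathbb{E}_\theta[\pi_0 q^a(\theta)-u(q^a(\theta),\theta)]$. *)

From HB Require Import structures.
From mathcomp Require Import all_boot all_order all_algebra.
From mathcomp Require Import all_classical all_reals all_analysis.
Set Implicit Arguments. Unset Strict Implicit. Unset Printing Implicit Defensive.
Import Order.TTheory GRing.Theory Num.Theory.
Local Open Scope ring_scope.

Definition phi {R : realType} (lam eps x : R) : R :=
  if eps <= `|x| then (`|x| - eps) ^+ 2 / (2 * lam) else 0.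

(* Expected cost H(f) of the participating consumer who reports baseline f:
   with prob. p it is called (consumption qc f theta, paid pi2 per unit of
   reduction f - q), otherwise (consumption qb f theta) it pays phi(f - q). *)
Definition Hcost {d} {T : measurableType d} {R : realType}
  (P : probability T R) (th : T -> R) (u : R -> R -> R)
  (pi0 pi2 p lam eps : R) (qb qc : R -> R -> R) (f : R) : \bar R :=
  (p%:E * 'E_P[fun w => (pi0 * qc f (th w) - u (qc f (th w)) (th w)
                         - pi2 * (f - qc f (th w)))%R]
   + (1 - p)%:E * 'E_P[fun w => (pi0 * qb f (th w) - u (qb f (th w)) (th w)
                         + phi lam eps (f - qb f (th w)))%R])%E.

From HB Require Import structures.
From mathcomp Require Import all_boot all_order all_algebra.
From mathcomp Require Import all_classical all_reals all_analysis.
From mathcomp Require Import ring lra measurable_realfun.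
Set Implicit Arguments.
Unset Strict Implicit.
Unset Printing Implicit Defensive.
Import Order.TTheory GRing.Theory Num.Theory.
Local Open Scope ring_scope.
Local Open Scope classical_set_scope.

(* Since d^2u/dq^2 = -1/d, the net cost q |-> pi0 q - u(q, theta) is the
   parabola G(theta) + (q - q^a(theta))^2 / (2d).  Minimising over q in each
   branch gives closed forms: a called consumer pays
   G + pi2 q^a - d pi2^2 / 2 - pi2 f, an uncalled one G + phi_{d+lam}(f - q^a),
   the infimal convolution of the parabola with phi_lam being the deadband
   penalty with lam replaced by d + lam.  Hence
   H(f) = const - p pi2 f + (1 - p) E[phi_{d+lam}(f - q^a)].  Convexity of phi
   bounds the slope of the last term from below by (f - eps - E q^a)/(d + lam),
   so lowering an f beyond E q^a + (d + lam) p pi2 / (1 - p) + eps strictly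
   decreases H.  For individual rationality, the report f = E q^a incurs no
   penalty since |E q^a - q^a| <= eps, and H(E q^a) = E G - p d pi2^2 / 2. *)

Lemma quadratic_of_derive2_cst (R : realType) (v : R -> R) (k : R) :
  (forall q, derivable v q 1 /\ derivable (derive1 v) q 1 /\
             derive1 (derive1 v) q = k) ->
  forall q, v q = v 0 + (v 1 - v 0 - k / 2) * q + k / 2 * q ^+ 2.
Proof.
move=> v2.
have v1E x : derive1 v x = derive1 v 0 + k * x.
  suff : derive1 v x - k * x = derive1 v 0 - k * 0 by lra.
  apply: (@is_derive_0_is_cst _ (fun y => derive1 v y - k * y)) => y.
  have [_ [dv1 v2y]] := v2 y.
  have dv1' := derivableP dv1; rewrite -derive1E v2y in dv1'.
  apply: (is_derive_eq (is_deriveB dv1' (is_deriveZ k (is_derive_id y 1)))).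
  by rewrite /= scaler1 subrr.
set c := derive1 v 0 in v1E.
have vE x : v x - c * x - k / 2 * x ^+ 2 = v 0 - c * 0 - k / 2 * 0 ^+ 2.
  apply: (@is_derive_0_is_cst _ (fun y => v y - c * y - k / 2 * y ^+ 2)) => y.
  have [dv _] := v2 y.
  have dv' := derivableP dv; rewrite -derive1E v1E in dv'.
  apply: (is_derive_eq (is_deriveB (is_deriveB dv' (is_deriveZ c (is_derive_id y 1)))
                         (is_deriveZ (k / 2) (is_deriveX 2 (is_derive_id y 1))))).
  by rewrite /= !scaler1 /GRing.scale /= expr1; field.
move=> q; have := vE 1; have := vE q.
rewrite expr1n expr0n /= !mulr0 !subr0 !mulr1 => vq v1.
have -> : v 1 - v 0 - k / 2 = c by lra.
lra.
Qed.

Section quadratic.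
Variables (R : realFieldType) (a b k : R).
Hypothesis k_gt0 : 0 < k.

Lemma quadratic_centered x q : x = - b / (2 * k) ->
  a + b * q + k * q ^+ 2 = a + b * x + k * x ^+ 2 + k * (q - x) ^+ 2.
Proof. by move=> ->; field; rewrite gt_eqF. Qed.

Lemma quadratic_argmin x :
  (forall q, a + b * x + k * x ^+ 2 <= a + b * q + k * q ^+ 2) -> x = - b / (2 * k).
Proof.
set v := - b / (2 * k) => xmin; have := xmin v.
rewrite (@quadratic_centered v x) // gerDl pmulr_rle0 // => sq_le0.
by apply/eqP; rewrite -subr_eq0 -sqrf_eq0 eq_le sq_le0 sqr_ge0.
Qed.

End quadratic.

Lemma sqr_add_linear_min (R : realFieldType) (d c x z : R) : 0 < d ->
  (forall q, (z - x) ^+ 2 / (2 * d) + c * z <= (q - x) ^+ 2 / (2 * d) + c * q) ->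
  (z - x) ^+ 2 / (2 * d) + c * z = c * x - d * c ^+ 2 / 2.
Proof.
move=> d_gt0 zmin.
have sqE q : (q - x) ^+ 2 / (2 * d) + c * q
             = c * x - d * c ^+ 2 / 2 + (q - x + d * c) ^+ 2 / (2 * d).
  by field; rewrite gt_eqF.
have := zmin (x - d * c); rewrite !sqE (_ : x - d * c - x + d * c = 0); last by ring.
rewrite expr0n /= mul0r addr0 gerDl => sq_le0.
suff -> : (z - x + d * c) ^+ 2 / (2 * d) = 0 by rewrite addr0.
by apply/eqP; rewrite eq_le sq_le0 divr_ge0 ?sqr_ge0 //; lra.
Qed.

Lemma sqrD_div_le (R : realFieldType) (a b d l : R) : 0 < d -> 0 < l ->
  (a + b) ^+ 2 / (2 * (d + l)) <= a ^+ 2 / (2 * d) + b ^+ 2 / (2 * l).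
Proof.
move=> d_gt0 l_gt0; rewrite -subr_ge0.
have -> : a ^+ 2 / (2 * d) + b ^+ 2 / (2 * l) - (a + b) ^+ 2 / (2 * (d + l))
          = (a * l - b * d) ^+ 2 / (2 * d * l * (d + l)) by field; lra.
by rewrite divr_ge0 ?sqr_ge0 // !mulr_ge0 //; lra.
Qed.

Section deadband_penalty.
Variable R : realType.
Implicit Types l d eps x y M : R.

Lemma phi_ge0 l eps x : 0 < l -> 0 <= phi l eps x.
Proof.
by move=> l_gt0; rewrite /phi; case: ifP => // _; rewrite divr_ge0 ?sqr_ge0 //; lra.
Qed.

Lemma phiN l eps x : phi l eps (- x) = phi l eps x.
Proof. by rewrite /phi normrN. Qed.

Lemma phi_eq0 l eps x : `|x| <= eps -> phi l eps x = 0.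
Proof.
rewrite /phi => x_le; case: ifP => // eps_le.
have -> : `|x| = eps by apply/eqP; rewrite eq_le x_le eps_le.
by rewrite subrr expr0n mul0r.
Qed.

Lemma phi_le l eps x M : 0 < l -> 0 < eps -> `|x| <= M ->
  phi l eps x <= M ^+ 2 / (2 * l).
Proof.
move=> l_gt0 eps_gt0 xM; rewrite /phi; case: ifP => [eps_le|_].
  have x_ge0 := normr_ge0 x.
  by rewrite ler_pM2r ?invr_gt0 ?mulr_gt0 // ler_sqr ?nnegrE; lra.
by rewrite divr_ge0 ?sqr_ge0 //; lra.
Qed.

Lemma measurable_phi l eps : measurable_fun setT (phi l eps).
Proof.
apply: measurable_fun_ifT.
- apply: measurable_fun_ler; [exact: measurable_cst | exact: normr_measurable].
- apply: measurable_funM (measurable_cst _).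
  apply: measurable_funX; apply: measurable_funB (measurable_cst _).
  exact: normr_measurable.
- exact: measurable_cst.
Qed.

Lemma phi_le_infconv l d eps x y : 0 < l -> 0 < d ->
  phi (d + l) eps x <= (x - y) ^+ 2 / (2 * d) + phi l eps y.
Proof.
move=> l_gt0 d_gt0.
pose b := if eps <= `|y| then `|y| - eps else 0.
have phi_yE : phi l eps y = b ^+ 2 / (2 * l).
  by rewrite /phi /b; case: ifP => //; rewrite expr0n /= mul0r.
have b_ge0 : 0 <= b by rewrite /b; case: ifP => //; lra.
have y_le : `|y| <= eps + b by rewrite /b; case: (leP eps `|y|) => h; lra.
rewrite phi_yE {1}/phi; case: ifP => [eps_le|_]; last first.
  by rewrite addr_ge0 // divr_ge0 ?sqr_ge0 //; lra.
have tri : `|x| <= `|x - y| + `|y| by have := ler_normD (x - y) y; rewrite subrK.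
rewrite -[(x - y) ^+ 2]real_normK ?num_real //.
apply: le_trans (sqrD_div_le `|x - y| b d_gt0 l_gt0).
have xy_ge0 := normr_ge0 (x - y).
by rewrite ler_pM2r ?invr_gt0 ?mulr_gt0 // ?ler_sqr ?nnegrE; lra.
Qed.

Lemma phi_infconv_attained l d eps x : 0 < l -> 0 < d -> 0 < eps ->
  exists y, (x - y) ^+ 2 / (2 * d) + phi l eps y = phi (d + l) eps x.
Proof.
move=> l_gt0 d_gt0 eps_gt0.
have dl_neq0 : d + l != 0 by rewrite gt_eqF //; lra.
case: (lerP eps `|x|) => x_ge; last first.
  exists x; rewrite /phi subrr expr0n /= mul0r add0r.
  by case: (leP eps `|x|) => //; lra.
wlog x_ge0 : x x_ge / 0 <= x.
  move=> gen; case: (lerP 0 x) => [|x_lt0]; first exact: gen.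
  have := gen (- x); rewrite normrN oppr_ge0 => /(_ x_ge (ltW x_lt0)) [y yE].
  by exists (- y); rewrite phiN -[in RHS]phiN -yE opprK -opprD sqrrN.
rewrite ger0_norm // in x_ge.
(* The optimal y splits the excess x - eps between the two costs in the ratio d : l. *)
pose y := x - d * (x - eps) / (d + l).
have yE : y - eps = l * (x - eps) / (d + l) by rewrite /y; field.
have y_ge : 0 <= y - eps by rewrite yE divr_ge0 ?mulr_ge0 //; lra.
have eps_le_y : eps <= y by lra.
exists y; rewrite /phi !ger0_norm ?eps_le_y ?x_ge /=; try lra.
by rewrite yE /y; field; lra.
Qed.

Lemma phi_sub_ge l eps x y : 0 < l -> 0 < eps -> y <= x ->
  (x - y) * (y - eps) / l <= phi l eps x - phi l eps y.
Proof.
move=> l_gt0 eps_gt0 yx.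
pose psi (z : R) := if eps <= `|z| then (`|z| - eps) ^+ 2 else 0.
have phiE z : phi l eps z = psi z / (2 * l).
  by rewrite /phi /psi; case: ifP => //; rewrite mul0r.
have -> : (x - y) * (y - eps) / l = 2 * ((x - y) * (y - eps)) / (2 * l).
  by field; rewrite gt_eqF.
rewrite !phiE -mulrBl ler_pM2r ?invr_gt0 ?mulr_gt0 // /psi.
case: (lerP 0 x) => x0; [rewrite (ger0_norm x0) | rewrite (ltr0_norm x0)];
case: (lerP 0 y) => y0;
  [rewrite (ger0_norm y0) | rewrite (ltr0_norm y0) | rewrite (ger0_norm y0) | rewrite (ltr0_norm y0)];
case: (leP eps x) => ex //; try case: (leP eps (- x)) => ex' //;
case: (leP eps y) => ey //; try case: (leP eps (- y)) => ey' //; nra.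
Qed.

Lemma phi_infconv_min l d eps x z : 0 < l -> 0 < d -> 0 < eps ->
  (forall y, (x - z) ^+ 2 / (2 * d) + phi l eps z <= (x - y) ^+ 2 / (2 * d) + phi l eps y) ->
  (x - z) ^+ 2 / (2 * d) + phi l eps z = phi (d + l) eps x.
Proof.
move=> l_gt0 d_gt0 eps_gt0 zmin; apply/eqP; rewrite eq_le phi_le_infconv // andbT.
by have [y <-] := phi_infconv_attained x l_gt0 d_gt0 eps_gt0; exact: zmin.
Qed.

End deadband_penalty.

Section consumer.
Variables (R : realType) (u : R -> R -> R) (d pi0 pi2 lam eps : R).
Variables (qa : R -> R) (qb qc : R -> R -> R).
Hypothesis d_gt0 : 0 < d.
Hypothesis u_derive2 : forall t q, derivable (fun x => u x t) q 1 /\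
  derivable (derive1 (fun x => u x t)) q 1 /\ derive1 (derive1 (fun x => u x t)) q = - d^-1.
Hypothesis qa_min : forall t q, pi0 * qa t - u (qa t) t <= pi0 * q - u q t.

Definition min_net_cost t := pi0 * qa t - u (qa t) t.

Lemma net_cost_quadratic t q : pi0 * q - u q t =
  - u 0 t + (pi0 - (u 1 t - u 0 t + (2 * d)^-1)) * q + (2 * d)^-1 * q ^+ 2.
Proof.
rewrite (quadratic_of_derive2_cst (u_derive2 t) q); field.
by rewrite gt_eqF.
Qed.

Lemma qaE t : qa t = d * (u 1 t - u 0 t - pi0) + 2^-1.
Proof.
have d_neq0 : d != 0 := lt0r_neq0 d_gt0.
have k_gt0 : 0 < (2 * d)^-1 by rewrite invr_gt0 mulr_gt0.
rewrite (@quadratic_argmin _ (- u 0 t) (pi0 - (u 1 t - u 0 t + (2 * d)^-1)) _ k_gt0 (qa t)).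
  by field.
by move=> q; rewrite -!net_cost_quadratic qa_min.
Qed.

Lemma net_cost_sq t q : pi0 * q - u q t = min_net_cost t + (q - qa t) ^+ 2 / (2 * d).
Proof.
have k_gt0 : 0 < (2 * d)^-1 by rewrite invr_gt0 mulr_gt0.
rewrite /min_net_cost !net_cost_quadratic [in LHS](@quadratic_centered _ _ _ _ k_gt0 (qa t)).
  by rewrite [_ * (q - qa t) ^+ 2]mulrC.
by rewrite qaE; field; rewrite lt0r_neq0.
Qed.

Hypothesis lam_gt0 : 0 < lam.
Hypothesis eps_gt0 : 0 < eps.
Hypothesis qb_min : forall f t q, pi0 * qb f t - u (qb f t) t + phi lam eps (f - qb f t)
                                  <= pi0 * q - u q t + phi lam eps (f - q).
Hypothesis qc_min : forall f t q, pi0 * qc f t - u (qc f t) t - pi2 * (f - qc f t)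
                                  <= pi0 * q - u q t - pi2 * (f - q).

Lemma called_cost f t : pi0 * qc f t - u (qc f t) t - pi2 * (f - qc f t)
  = min_net_cost t + pi2 * qa t - d * pi2 ^+ 2 / 2 - pi2 * f.
Proof.
have zmin q : (qc f t - qa t) ^+ 2 / (2 * d) + pi2 * qc f t
              <= (q - qa t) ^+ 2 / (2 * d) + pi2 * q.
  by have := qc_min f t q; rewrite !net_cost_sq; lra.
by have := sqr_add_linear_min d_gt0 zmin; rewrite net_cost_sq; lra.
Qed.

Lemma uncalled_cost f t : pi0 * qb f t - u (qb f t) t + phi lam eps (f - qb f t)
  = min_net_cost t + phi (d + lam) eps (f - qa t).
Proof.
have shiftE y : f - y - qa t = f - qa t - y by ring.
have diffE : f - qa t - (f - qb f t) = qb f t - qa t by ring.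
have zmin y : (f - qa t - (f - qb f t)) ^+ 2 / (2 * d) + phi lam eps (f - qb f t)
              <= (f - qa t - y) ^+ 2 / (2 * d) + phi lam eps y.
  by have := qb_min f t (f - y); rewrite !net_cost_sq subKr shiftE diffE; lra.
have := phi_infconv_min lam_gt0 d_gt0 eps_gt0 zmin.
by rewrite net_cost_sq diffE; lra.
Qed.

End consumer.

Section expectation.
Context (R : realType) (dsp : measure_display) (T : measurableType dsp).
Variable P : probability T R.
Implicit Types (Y Z : T -> R) (a b c C : R).

Lemma Lfun1_bounded Y C : measurable_fun setT Y -> (forall w, `|Y w| <= C) ->
  Y \in Lfun P 1.
Proof.
move=> mY YC; apply/Lfun1_integrable.
apply: (@le_integrable _ _ _ P setT measurableT _ (EFin \o cst C)).
- exact/measurable_EFinP.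
- by move=> w _ /=; rewrite lee_fin (le_trans (YC w)) ?ler_norm.
- exact: finite_measure_integrable_cst.
Qed.

Let affineE Y Z a c b :
  (fun w => a * Y w + c * Z w + b) = (a \o* Y \+ c \o* Z) \+ cst b.
Proof. by apply/funext => w /=; rewrite [Y w * a]mulrC [Z w * c]mulrC. Qed.

Lemma Lfun1_affine Y Z a c b : Y \in Lfun P 1 -> Z \in Lfun P 1 ->
  (fun w => a * Y w + c * Z w + b) \in Lfun P 1.
Proof.
move=> LY LZ; rewrite affineE.
by rewrite !rpredD ?Lfun_cst ?Lfun_scale.
Qed.

Lemma expectation_affine Y Z a c b : Y \in Lfun P 1 -> Z \in Lfun P 1 ->
  'E_P[fun w => (a * Y w + c * Z w + b)%R]%E = (a * fine 'E_P[Y]%E + c * fine 'E_P[Z]%E + b)%:E.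
Proof.
move=> LY LZ; rewrite affineE.
rewrite !expectationD ?rpredD ?Lfun_cst ?Lfun_scale //.
rewrite !expectationZl // expectation_cst.
by rewrite -(fineK (expectation_fin_num LY)) -(fineK (expectation_fin_num LZ)).
Qed.

Lemma fine_expectation_le Y Z : Y \in Lfun P 1 -> Z \in Lfun P 1 ->
  (forall w, Y w <= Z w) -> fine 'E_P[Y]%E <= fine 'E_P[Z]%E.
Proof.
move=> /[dup] LY /Lfun1_integrable iY /[dup] LZ /Lfun1_integrable iZ YZ.
rewrite fine_le ?expectation_fin_num // unlock.
by apply: le_integral => // w _; rewrite lee_fin.
Qed.

End expectation.

Section expected_cost.
Context (R : realType) (dsp : measure_display) (T : measurableType dsp).
Variables (P : probability T R) (th : T -> R) (u : R -> R -> R).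
Variables (d lam eps pi0 pi2 p qmin qmax : R) (qa : R -> R) (qb qc : R -> R -> R).
Hypothesis u_integrable : forall q, P.-integrable setT (fun w => (u q (th w))%:E).
Hypothesis d_gt0 : 0 < d.
Hypothesis u_derive2 : forall t q, derivable (fun x => u x t) q 1 /\
  derivable (derive1 (fun x => u x t)) q 1 /\ derive1 (derive1 (fun x => u x t)) q = - d^-1.
Hypothesis lam_gt0 : 0 < lam.
Hypothesis eps_gt0 : 0 < eps.
Hypothesis qa_min : forall t q, pi0 * qa t - u (qa t) t <= pi0 * q - u q t.
Hypothesis qb_min : forall f t q, pi0 * qb f t - u (qb f t) t + phi lam eps (f - qb f t)
                                  <= pi0 * q - u q t + phi lam eps (f - q).
Hypothesis qc_min : forall f t q, pi0 * qc f t - u (qc f t) t - pi2 * (f - qc f t)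
                                  <= pi0 * q - u q t - pi2 * (f - q).
Hypothesis qa_bounded : forall t, qmin <= qa t <= qmax.

Definition mean_qa := fine 'E_P[qa \o th]%E.
Definition mean_min_cost := fine 'E_P[fun w => min_net_cost u pi0 qa (th w)]%E.
Definition mean_penalty f := fine 'E_P[fun w => phi (d + lam) eps (f - qa (th w))]%E.

Let dl_gt0 : 0 < d + lam. Proof. exact: addr_gt0. Qed.

Let qa_norm_le t : `|qa t| <= `|qmin| + `|qmax|.
Proof.
have [qmin_le le_qmax] := andP (qa_bounded t).
have := ler_norm qmax; have := ler_norm (- qmin); rewrite normrN.
have := normr_ge0 qmin; have := normr_ge0 qmax.
by case: (lerP 0 (qa t)) => [/ger0_norm | /ltr0_norm] ->; lra.
Qed.

Lemma measurable_qa : measurable_fun setT (qa \o th).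
Proof.
have mu q : measurable_fun setT (fun w => u q (th w)).
  exact/measurable_EFinP/(measurable_int P (u_integrable q)).
rewrite (_ : qa \o th = fun w => d * (u 1 (th w) - u 0 (th w) - pi0) + 2^-1); last first.
  by apply/funext => w /=; rewrite (qaE d_gt0 u_derive2 qa_min).
apply: measurable_funD (measurable_cst _); apply: measurable_funM (measurable_cst _) _.
exact: measurable_funB (measurable_funB (mu 1) (mu 0)) (measurable_cst _).
Qed.

Lemma Lfun_qa : qa \o th \in Lfun P 1.
Proof. exact: (Lfun1_bounded P measurable_qa (fun w => qa_norm_le (th w))). Qed.

Lemma Lfun_min_cost : (fun w => min_net_cost u pi0 qa (th w)) \in Lfun P 1.
Proof.
have -> : (fun w => min_net_cost u pi0 qa (th w))
          = (fun w => (-1) * u 0 (th w) + (- (2 * d)^-1) * qa (th w) ^+ 2 + 0).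
  apply/funext => w; have := net_cost_sq d_gt0 u_derive2 qa_min (th w) 0.
  by rewrite sub0r sqrrN; lra.
apply: Lfun1_affine; first exact/Lfun1_integrable/u_integrable.
apply: (@Lfun1_bounded _ _ _ P _ ((`|qmin| + `|qmax|) ^+ 2)).
  exact: measurable_funX measurable_qa.
by move=> w; rewrite normrX lerXn2r ?nnegrE ?addr_ge0 ?qa_norm_le.
Qed.

Lemma Lfun_penalty f : (fun w => phi (d + lam) eps (f - qa (th w))) \in Lfun P 1.
Proof.
apply: (@Lfun1_bounded _ _ _ P _ ((`|f| + `|qmin| + `|qmax|) ^+ 2 / (2 * (d + lam)))).
  apply: measurableT_comp (measurable_phi _ _) _.
  exact: measurable_funB (measurable_cst _) measurable_qa.
move=> w; rewrite ger0_norm ?phi_ge0 // phi_le //.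
by rewrite -addrA (le_trans (ler_normB _ _)) // lerD2l qa_norm_le.
Qed.

Lemma HcostE f : Hcost P th u pi0 pi2 p lam eps qb qc f =
  (mean_min_cost + p * pi2 * mean_qa - p * d * pi2 ^+ 2 / 2 - p * pi2 * f
   + (1 - p) * mean_penalty f)%:E.
Proof.
have calledE : (fun w => pi0 * qc f (th w) - u (qc f (th w)) (th w) - pi2 * (f - qc f (th w)))
    = (fun w => 1 * min_net_cost u pi0 qa (th w) + pi2 * (qa \o th) w + (- (d * pi2 ^+ 2 / 2) - pi2 * f)).
  by apply/funext => w; rewrite (called_cost d_gt0 u_derive2 qa_min qc_min) /=; ring.
have uncalledE : (fun w => pi0 * qb f (th w) - u (qb f (th w)) (th w) + phi lam eps (f - qb f (th w)))
    = (fun w => 1 * min_net_cost u pi0 qa (th w) + 1 * phi (d + lam) eps (f - qa (th w)) + 0).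
  by apply/funext => w; rewrite (uncalled_cost d_gt0 u_derive2 qa_min lam_gt0 eps_gt0 qb_min); ring.
rewrite /Hcost calledE uncalledE !expectation_affine ?Lfun_min_cost ?Lfun_qa ?Lfun_penalty //.
by rewrite -!EFinM -EFinD /mean_min_cost /mean_qa /mean_penalty; congr EFin; ring.
Qed.

Lemma mean_penalty_sub_ge f h : 0 < h ->
  h * (f - h - eps - mean_qa) / (d + lam) <= mean_penalty f - mean_penalty (f - h).
Proof.
move=> h_gt0.
have pointwise w :
    - (h / (d + lam)) * (qa \o th) w + 0 * (qa \o th) w + h * (f - h - eps) / (d + lam)
    <= 1 * phi (d + lam) eps (f - qa (th w)) + (-1) * phi (d + lam) eps (f - h - qa (th w)) + 0.
  have := @phi_sub_ge _ _ eps (f - qa (th w)) (f - h - qa (th w)) dl_gt0 eps_gt0.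
  rewrite (_ : f - qa (th w) - (f - h - qa (th w)) = h) /=; last by ring.
  by move=> /(_ _); lra.
have := fine_expectation_le (Lfun1_affine _ _ _ Lfun_qa Lfun_qa)
  (Lfun1_affine _ _ _ (Lfun_penalty f) (Lfun_penalty (f - h))) pointwise.
by rewrite !expectation_affine ?Lfun_qa ?Lfun_penalty //= /mean_qa /mean_penalty; lra.
Qed.

Lemma mean_penalty_eq0 f : (forall w, `|f - qa (th w)| <= eps) -> mean_penalty f = 0.
Proof.
move=> close; rewrite /mean_penalty.
rewrite (_ : (fun w => _) = cst 0) ?expectation_cst //.
by apply/funext => w; rewrite phi_eq0.
Qed.

Lemma Hcost_mean_qa_le : 0 <= p -> qmax - mean_qa <= eps -> mean_qa - qmin <= eps ->
  (Hcost P th u pi0 pi2 p lam eps qb qc mean_qa <= mean_min_cost%:E)%E.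
Proof.
move=> p_ge0 qmax_le qmin_ge; rewrite HcostE mean_penalty_eq0 ?lee_fin.
  by have := mulr_ge0 (mulr_ge0 p_ge0 (ltW d_gt0)) (sqr_ge0 pi2); lra.
move=> w; have [qmin_le le_qmax] := andP (qa_bounded (th w)).
by rewrite ler_norml; apply/andP; split; lra.
Qed.

End expected_cost.

Lemma argmin_report_le (R : realFieldType) (m : R -> R) (a p pi2 D eps c fstar : R) :
  0 < p < 1 -> 0 < D ->
  (forall f h : R, 0 < h -> h * (f - h - eps - c) / D <= m f - m (f - h)) ->
  (forall f, a - p * pi2 * fstar + (1 - p) * m fstar <= a - p * pi2 * f + (1 - p) * m f) ->
  fstar - c <= D * (p * pi2 / (1 - p)) + eps.
Proof.
move=> /andP[p_gt0 p_lt1] D_gt0 m_incr fstar_min; rewrite leNgt; apply/negP => too_high.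
set k := p * pi2 / (1 - p) in too_high.
have kE : (1 - p) * k = p * pi2 by rewrite /k; field; rewrite subr_eq0 gt_eqF.
(* Lowering the report by h saves at least (1 - p) (h^2 / D + h k) in penalty
   and loses only p pi2 h = (1 - p) h k. *)
pose h := (fstar - c - (D * k + eps)) / 2.
have h_gt0 : 0 < h by rewrite /h; lra.
have gap : fstar - h - eps - c = h + D * k by rewrite /h; field.
have := m_incr fstar h h_gt0; rewrite gap.
have := fstar_min (fstar - h).
have : 0 < (1 - p) * (h * h / D) by rewrite mulr_gt0 ?divr_gt0 ?mulr_gt0 ?subr_gt0.
have -> : h * (h + D * k) / D = h * h / D + h * k by field; rewrite gt_eqF.
move=> pos min_h sub_h.
have q_ge0 : 0 <= 1 - p by rewrite subr_ge0 ltW.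
have := ler_wpM2l q_ge0 sub_h.
rewrite mulrDr [_ * (h * k)]mulrCA kE; lra.
Qed.

Theorem theorem4 (R : realType) (dsp : measure_display) (T : measurableType dsp)
  (P : probability T R) (th : {RV P >-> R})
  (u : R -> R -> R) (d lam eps pi0 pi2 p qmin qmax fstar : R)
  (qa : R -> R) (qb qc : R -> R -> R) :
  (* theta has a continuous (atomless) distribution *)
  (forall x : R, P (th @^-1` [set x]) = 0%E) ->
  (* regularity: u(q, theta) integrable for every q *)
  (forall q : R, P.-integrable setT (fun w => (u q (th w))%:E)) ->
  (* d^2 u / dq^2 = -1/d everywhere *)
  0 < d ->
  (forall t q : R, derivable (fun x => u x t) q 1 /\
     derivable (derive1 (fun x => u x t)) q 1 /\
     derive1 (derive1 (fun x => u x t)) q = - d^-1) ->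
  0 < lam -> 0 < eps -> 0 < pi0 -> 0 < pi2 -> 0 < p < 1 ->
  (* q^a, q^b, q^c are the argmins *)
  (forall t q : R, pi0 * qa t - u (qa t) t <= pi0 * q - u q t) ->
  (forall f t q : R, pi0 * qb f t - u (qb f t) t + phi lam eps (f - qb f t)
                     <= pi0 * q - u q t + phi lam eps (f - q)) ->
  (forall f t q : R, pi0 * qc f t - u (qc f t) t - pi2 * (f - qc f t)
                     <= pi0 * q - u q t - pi2 * (f - q)) ->
  (* f* minimizes H *)
  (forall f : R, (Hcost P th u pi0 pi2 p lam eps qb qc fstar
                  <= Hcost P th u pi0 pi2 p lam eps qb qc f)%E) ->
  (forall t : R, qmin <= qa t <= qmax) ->
  (maxe (qmax%:E - 'E_P[qa \o th]) ('E_P[qa \o th] - qmin%:E) <= eps%:E)%E ->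
  (fstar%:E - 'E_P[qa \o th] <= ((d + lam) * (p * pi2 / (1 - p)) + eps)%:E)%E /\
  (Hcost P th u pi0 pi2 p lam eps qb qc fstar
     <= 'E_P[fun w => (pi0 * qa (th w) - u (qa (th w)) (th w))%R])%E.
Proof.
move=> _ u_int d_gt0 u_derive2 lam_gt0 eps_gt0 _ _ p01 qa_min qb_min qc_min
  fstar_min qa_bounded spread.
have EX : 'E_P[qa \o th]%E = (mean_qa P th qa)%:E.
  by rewrite fineK ?expectation_fin_num ?(Lfun_qa u_int d_gt0 u_derive2 qa_min qa_bounded).
have EG : 'E_P[fun w => (pi0 * qa (th w) - u (qa (th w)) (th w))%R]%E
          = (mean_min_cost P th u pi0 qa)%:E.
  by rewrite fineK ?expectation_fin_num ?(Lfun_min_cost u_int d_gt0 u_derive2 qa_min qa_bounded).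
have HE := HcostE p u_int d_gt0 u_derive2 lam_gt0 eps_gt0 qa_min qb_min qc_min qa_bounded.
move: spread; rewrite EX EG ge_max -!EFinB !lee_fin => /andP[qmax_le qmin_ge].
split.
  apply: (argmin_report_le p01 (addr_gt0 d_gt0 lam_gt0)).
    exact: (mean_penalty_sub_ge u_int d_gt0 u_derive2 lam_gt0 eps_gt0 qa_min qa_bounded).
  by move=> f; move: (fstar_min f); rewrite !HE lee_fin; apply.
apply: le_trans (fstar_min _) _.
have [p_gt0 _] := andP p01.
exact: (Hcost_mean_qa_le u_int d_gt0 u_derive2 lam_gt0 eps_gt0 qa_min qb_min qc_min qa_bounded
  (ltW p_gt0) qmax_le qmin_ge).
Qed.
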